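(* Let $\xi>0$, $v_2<v_1$ with either $v_2<0<v_1$ or $0<v_2<v_1$, and for $\lambda>0$ let $\tilde p(x,t|v_j)$ be the (generalized) density of $\tilde X(t)$, the position of the extended telegraph process driven by GCPs with parameter $\lambda$ with Poissonian resets to the origin at rate $\xi$, conditional on $\tilde X(0)=0$, $V(0)=v_j$. Then for $t>0$, $v_2t<x<v_1t$ and $j=1,2$, $$ \pi(x,t):=\lim_{\lambda\to+\infty}\tilde p(x,t|v_j)=\mathbb 1_{\{v_2t<x<v_1t\}}\frac{e^{-\xi t}}{(v_1-v_2)t}+\boldsymbol I(x,t)\frac{\xi}{v_1-v_2}\Gamma^\xi(x,t), $$ where $\Gamma^\xi(x,t)=\Gamma[0,M_x\xi,t\xi]$ if $v_2<0<v_1$ and $\Gamma^\xi(x,t)=\Gamma[0,\frac{x}{v_1}\xi,m_{x,t}\xi]$ if $0<v_2<v_1$.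
   Context: GCP with intensity $\lambda>0$: a Poisson process whose rate is random, exponentially distributed with mean $\lambda$; increments satisfy $P\{\tilde N_\lambda(t+s)-\tilde N_\lambda(t)=k\}=\frac{1}{1+\lambda s}(\frac{\lambda s}{1+\lambda s})^k$. The process: a particle starts at the origin with velocity $V(0)=v_j$ ($v_1,v_2\neq0$, $v_2<v_1$), moves with velocity alternating between $v_1$ and $v_2$, the periods at velocity $v_1$ and at $v_2$ being governed by two independent GCPs of intensity $\lambda$; additionally it is instantaneously reset to the origin at the epochs of an independent Poisson process of rate $\xi$, restarting afresh with velocity $v_j$. Equivalently, its density is $\tilde p(x,t|v_j)=e^{-\xi t}p(x,t|v_j)+\xi\int_0^te^{-\xi s}p(x,s|v_j)ds$, where $p(x,t|v_j)=\frac{\delta(x-v_jt)}{1+\lambda t}+\mathbb 1_{\{v_2t<x<v_1t\}}\frac{\lambda}{(v_1-v_2)(1+\lambda t)}$ is the (generalized, with Dirac delta $\delta$) density of the process without resets. Notation: $M_x=\max\{x/v_1,x/v_2\}$, $m_{x,t}=\min\{x/v_2,t\}$, $\Gamma(a,z_0,z_1)=\int_{z_0}^{z_1}s^{a-1}e^{-s}ds$, $\boldsymbol I(x,t)=\mathbb 1_{\{\min\{v_2t,0\}<x<v_1t\}}$. *)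

From HB Require Import structures.
From mathcomp Require Import all_boot all_order all_algebra.
From mathcomp Require Import all_classical all_reals all_analysis.
Set Implicit Arguments. Unset Strict Implicit. Unset Printing Implicit Defensive.
Import Order.TTheory GRing.Theory Num.Theory.
Import numFieldNormedType.Exports.
Local Open Scope classical_set_scope.
Local Open Scope ring_scope.

Section Defs.
Variable R : realType.

(* Absolutely continuous part of the density of the GCP-driven telegraph
   process without resets at time s:  1_{v2 s < x < v1 s} lambda/((v1-v2)(1+lambda s)). *)
Definition p_ac (lam v1 v2 x s : R) : R :=
  if (v2 * s < x) && (x < v1 * s) then lam / ((v1 - v2) * (1 + lam * s)) else 0.

Definition dirac_pt (y : R) : \bar R := if y == 0 then +oo%E else 0%E.

Definition p_gen (lam v1 v2 vj x s : R) : \bar R :=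
  (dirac_pt (x - vj * s) * ((1 + lam * s)^-1)%:E + (p_ac lam v1 v2 x s)%:E)%E.

(* int_0^t e^{-xi s} delta(x - vj s)/(1+lam s) ds, evaluated by the sifting
   property delta(x - vj s) = delta(s - x/vj)/|vj|  (vj <> 0). *)
Definition dirac_time_integral (lam xi vj x t : R) : \bar R :=
  let s0 := x / vj in
  if (0 < s0) && (s0 < t) then (expR (- (xi * s0)) / (`|vj| * (1 + lam * s0)))%:E
  else 0%E.

Definition ptilde (lam xi v1 v2 vj x t : R) : \bar R :=
  ((expR (- (xi * t)))%:E * p_gen lam v1 v2 vj x t
   + xi%:E * (\int[lebesgue_measure]_(s in `]0%R, t[)
                 (expR (- (xi * s)) * p_ac lam v1 v2 x s)%:E
              + dirac_time_integral lam xi vj x t))%E.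

Definition Gamma_inc (a z0 z1 : R) : \bar R :=
  (\int[lebesgue_measure]_(s in `]z0%R, z1[) (s `^ (a - 1) * expR (- s))%:E)%E.

Definition M_x (v1 v2 x : R) : R := Num.max (x / v1) (x / v2).
Definition m_xt (v2 x t : R) : R := Num.min (x / v2) t.

Definition I_ind (v1 v2 x t : R) : R :=
  if (Num.min (v2 * t) 0 < x) && (x < v1 * t) then 1 else 0.

Definition Gamma_xi (xi v1 v2 x t : R) : \bar R :=
  if v2 < 0 then Gamma_inc 0 (M_x v1 v2 x * xi) (t * xi)
  else Gamma_inc 0 (x / v1 * xi) (m_xt v2 x t * xi).

Definition pi_lim (xi v1 v2 x t : R) : \bar R :=
  ((if (v2 * t < x) && (x < v1 * t) then expR (- (xi * t)) / ((v1 - v2) * t) else 0)%:E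
   + (I_ind v1 v2 x t * xi / (v1 - v2))%:E * Gamma_xi xi v1 v2 x t)%E.

End Defs.

From HB Require Import structures.
From mathcomp Require Import all_boot all_order all_algebra.
From mathcomp Require Import all_classical all_reals all_analysis.
From mathcomp Require Import ring measurable_realfun.
Set Implicit Arguments. Unset Strict Implicit. Unset Printing Implicit Defensive.
Import Order.TTheory GRing.Theory Num.Theory.
Import numFieldNormedType.Exports.
Local Open Scope classical_set_scope.
Local Open Scope ring_scope.

(* Since x lies strictly inside the cone v2 t < x < v1 t, the Dirac part
   delta(x - vj t)/(1 + lam t) vanishes at time t, and its time integral is
   O(1/lam). The absolutely continuous density lam/((v1 - v2)(1 + lam s))
   increases with lam to 1/((v1 - v2) s) on the cone, so by monotone convergence
   the reset term tends to xi/(v1 - v2) times the integral of e^(-xi s)/s over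
   the times s < t at which the cone contains x; the substitution u = xi s turns
   this integral into the incomplete Gamma function. *)

Section rational_limits.
Context {R : realType}.
Variables (c s : R).
Hypotheses (c_neq0 : c != 0) (s_gt0 : 0 < s).

Lemma inv_pinfty_cvg0 : (fun lam : R => lam^-1) @ +oo --> (0 : R).
Proof. by apply/gtr0_cvgV0; [near=> lam | exact: cvg_id]. Unshelve. all: end_near. Qed.

Lemma div_affine_cvg :
  (fun lam : R => lam / (c * (1 + lam * s))) @ +oo --> (c * s)^-1.
Proof.
have lim_inv : (fun lam : R => (c * (lam^-1 + s))^-1) @ +oo --> (c * s)^-1.
  apply: cvgV; first by rewrite mulf_neq0 // gt_eqF.
  apply: cvgM; first exact: cvg_cst.
  by rewrite -[s in _ --> s]add0r; apply: cvgD; [exact: inv_pinfty_cvg0 | exact: cvg_cst].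
apply: cvg_trans lim_inv; apply: near_eq_cvg; near=> lam.
have lam_gt0 : 0 < lam by near: lam; exists 0.
have den_neq0 : 1 + lam * s != 0 by rewrite gt_eqF // ltr_wpDr // ltW // mulr_gt0.
by field; rewrite c_neq0 den_neq0 gt_eqF.
Unshelve. all: end_near. Qed.

Lemma inv_affine_cvg0 : (fun lam : R => (c * (1 + lam * s))^-1) @ +oo --> (0 : R).
Proof.
have lim : (fun lam => lam / (c * (1 + lam * s)) * lam^-1) @ +oo --> (c * s)^-1 * 0.
  exact: cvgM div_affine_cvg inv_pinfty_cvg0.
rewrite mulr0 in lim; apply: cvg_trans lim; apply: near_eq_cvg; near=> lam.
have lam_gt0 : 0 < lam by near: lam; exists 0.
by rewrite mulrAC divff ?mul1r // gt_eqF.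
Unshelve. all: end_near. Qed.

End rational_limits.

Definition p_ac_limit {R : realType} (v1 v2 x s : R) : R :=
  if (v2 * s < x) && (x < v1 * s) then ((v1 - v2) * s)^-1 else 0.

Section absolutely_continuous_part.
Context {R : realType}.
Variables (v1 v2 x : R).
Hypothesis v21 : v2 < v1.

Let v21_gt0 : 0 < v1 - v2. Proof. by rewrite subr_gt0. Qed.

Lemma p_ac_ge0 lam s : 0 <= lam -> 0 <= s -> 0 <= p_ac lam v1 v2 x s.
Proof.
move=> lam_ge0 s_ge0; rewrite /p_ac; case: ifP => // _.
by rewrite divr_ge0 // mulr_ge0 ?(ltW v21_gt0) // addr_ge0 // mulr_ge0.
Qed.

Lemma p_ac_nondecreasing a b s : 0 <= a -> a <= b -> 0 <= s ->
  p_ac a v1 v2 x s <= p_ac b v1 v2 x s.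
Proof.
move=> a_ge0 ab s_ge0; rewrite /p_ac; case: ifP => // _.
have b_ge0 := le_trans a_ge0 ab.
have da : 0 < 1 + a * s by rewrite ltr_wpDr // mulr_ge0.
have db : 0 < 1 + b * s by rewrite ltr_wpDr // mulr_ge0.
rewrite ler_pdivrMr ?mulr_gt0 // mulrAC ler_pdivlMr ?mulr_gt0 // -subr_ge0.
have -> : b * ((v1 - v2) * (1 + a * s)) - a * ((v1 - v2) * (1 + b * s)) =
          (b - a) * (v1 - v2) by ring.
by rewrite mulr_ge0 ?subr_ge0 // ltW.
Qed.

Lemma p_ac_cvg s : 0 < s ->
  (fun lam => p_ac lam v1 v2 x s) @ +oo --> p_ac_limit v1 v2 x s.
Proof.
move=> s_gt0; rewrite /p_ac /p_ac_limit; case: ifP => _; last exact: cvg_cst.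
exact: div_affine_cvg (lt0r_neq0 v21_gt0) s_gt0.
Qed.

Lemma measurable_p_ac (lam : R) : 0 <= lam ->
  measurable_fun (`]0, +oo[ : set R) (p_ac lam v1 v2 x).
Proof.
move=> lam_ge0; apply: measurable_fun_if => //.
  by apply: measurable_and; apply: measurable_fun_ltr => //; exact: mulrl_measurable.
apply: measurable_funS (measurable_itv _) (@subIsetl _ _ _) _.
apply: subspace_continuous_measurable_fun => //.
apply: continuous_in_subspaceT => s; rewrite inE /= in_itv /= andbT => s_gt0.
apply: (@continuousM R R (cst lam) (fun u => ((v1 - v2) * (1 + lam * u))^-1)).
  exact: cst_continuous.
apply: continuousV.
  by rewrite mulf_neq0 ?gt_eqF // ltr_wpDr // mulr_ge0 // ltW.
apply: (@continuousM R R (cst (v1 - v2)) (fun u => 1 + lam * u)).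
  exact: cst_continuous.
apply: (@continuousD R R R (cst 1) (fun u => lam * u)); first exact: cst_continuous.
by apply: (@continuousM R R (cst lam) id); [exact: cst_continuous | exact: cvg_id].
Qed.

End absolutely_continuous_part.

Section monotone_convergence_pinfty.
Context d (T : measurableType d) (R : realType).
Variables (mu : {measure set T -> \bar R}) (D : set T) (mD : measurable D).
Variables (f : R -> T -> \bar R) (g : T -> \bar R).
Hypothesis mf : forall r, 0 <= r -> measurable_fun D (f r).
Hypothesis f_ge0 : forall r t, 0 <= r -> D t -> (0 <= f r t)%E.
Hypothesis f_nd : forall r r' t, 0 <= r -> r <= r' -> D t -> (f r t <= f r' t)%E.
Hypothesis f_cvg : forall t, D t -> f ^~ t @ +oo --> g t.

Lemma cvg_monotone_convergence_pinfty :
  (fun r => \int[mu]_(t in D) f r t)%E @ +oo --> (\int[mu]_(t in D) g t)%E.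
Proof.
pose F r := (\int[mu]_(t in D) f (Num.max r 0%R) t)%E.
have max_ge0 (r : R) : 0 <= Num.max r 0 by rewrite le_max lexx orbT.
have F_nd : nondecreasing_fun F.
  move=> r r' rr'; apply: ge0_le_integral => //; do ?by move=> *; exact: f_ge0.
  - exact: mf.
  - exact: mf.
  by move=> t Dt; apply: f_nd => //; rewrite le_max2.
have F_nat : (fun n : nat => F n%:R) @ \oo --> (\int[mu]_(t in D) g t)%E.
  have -> : (fun n : nat => F n%:R) = (fun n => \int[mu]_(t in D) f n%:R t)%E.
    by apply/funext => n; rewrite /F max_l.
  have -> : (\int[mu]_(t in D) g t = \int[mu]_(t in D) limn (fun n => f n%:R t))%E.
    apply: eq_integral => t /set_mem Dt; apply/esym/cvg_lim => //.
    exact: cvg_comp cvgr_idn (f_cvg Dt).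
  apply: cvg_monotone_convergence => //.
  - by move=> n; exact: mf.
  - by move=> n t Dt; exact: f_ge0.
  - by move=> t Dt m n mn; apply: f_nd => //; rewrite ler_nat.
have F_sup := nondecreasing_cvge F_nd.
have F_sup_nat : (fun n : nat => F n%:R) @ \oo --> ereal_sup (range F).
  exact: cvg_comp cvgr_idn F_sup.
rewrite (cvg_unique (@ereal_hausdorff R) F_nat F_sup_nat).
apply: cvg_trans F_sup; apply: near_eq_cvg; near=> r.
have r_ge0 : 0 <= r by near: r; exists 0; split => // ? /ltW.
by rewrite /F max_l.
Unshelve. all: end_near. Qed.

End monotone_convergence_pinfty.

Section lebesgue_dilation.
Context {R : realType}.
Local Notation mu := (@lebesgue_measure R).
Local Open Scope ereal_scope.
Variable c : R.
Hypothesis c_gt0 : (0 < c)%R.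

Let mulc_measurable : measurable_fun setT (( *%R c) : measurableTypeR R -> measurableTypeR R).
Proof. exact: mulrl_measurable. Qed.

(* The measure structure of a pushforward is registered only under this
   generated name. *)
Let dilated_measure : {measure set (measurableTypeR R) -> \bar R} :=
  mscale (NngNum (ltW c_gt0))
    (measure_function_pushforward__canonical__measure_function_Measure mu mulc_measurable).

Let dilated_measureE A : measurable A -> mu A = dilated_measure A.
Proof.
apply: lebesgue_measure_unique => _ [[a b]] _ <-.
rewrite /= /mscale /= /pushforward.
have -> : ( *%R c) @^-1` `]a, b]%classic = `](a / c)%R, (b / c)%R]%classic.
  by apply/seteqP; split => u /=; rewrite !in_itv /= ler_pdivlMr // ltr_pdivrMr // ![(u * c)%R]mulrC.
rewrite !lebesgue_measure_itv /= !lte_fin ltr_pM2r ?invr_gt0 //.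
case: ifP => _; last by rewrite mule0.
by rewrite -!EFinD -EFinM; congr EFin; field; rewrite gt_eqF.
Qed.

Lemma ge0_integral_dilation (g : R -> \bar R) (a b : R) :
  measurable_fun setT g -> (forall s, 0 <= g s) ->
  \int[mu]_(s in `](a * c)%R, (b * c)%R[) g s =
  c%:E * \int[mu]_(u in `]a, b[) g (c * u)%R.
Proof.
move=> mg g_ge0.
rewrite (eq_measure_integral dilated_measure); last by move=> A mA _; exact: dilated_measureE.
rewrite ge0_integral_mscale //=; last exact: measurable_funTS.
rewrite ge0_integral_pushforward //; last exact: measurable_funTS.
congr (_ * integral _ _ _).
by apply/seteqP; split => u /=; rewrite !in_itv /= (mulrC c u) !ltr_pM2r.
Qed.

Lemma Gamma_inc0_dilation (a b : R) : (0 <= a)%R ->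
  Gamma_inc 0 (a * c) (b * c) = \int[mu]_(u in `]a, b[) (expR (- (c * u)) / u)%:E.
Proof.
move=> a_ge0; have powR_exp_ge0 s : 0 <= (s `^ (0 - 1) * expR (- s))%:E.
  by rewrite lee_fin mulr_ge0 ?powR_ge0 ?expR_ge0.
have m_powR_exp : measurable_fun setT (fun s : R => (s `^ (0 - 1) * expR (- s))%:E).
  apply/measurable_EFinP; apply: measurable_funM; first exact: measurable_powR.
  by apply: measurableT_comp => //; apply: measurableT_comp.
rewrite /Gamma_inc ge0_integral_dilation // -ge0_integralZl_EFin //; first last.
- exact: ltW.
- apply/measurable_funTS/measurable_EFinP; apply: measurable_funM.
    exact: measurableT_comp (measurable_powR _) _.
  by apply: measurableT_comp => //; apply: measurableT_comp.
apply: eq_integral => u; rewrite inE /= in_itv /= => /andP[au _].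
have u_gt0 : (0 < u)%R := le_lt_trans a_ge0 au.
rewrite sub0r powR_inv1 ?mulr_ge0 ?ltW // -EFinM; congr EFin.
by field; rewrite !gt_eqF.
Qed.

End lebesgue_dilation.

Definition cone_entry {R : realType} (v1 v2 x : R) : R :=
  if v2 < 0 then M_x v1 v2 x else x / v1.

Lemma measurable_expR_div {R : realType} (xi : R) :
  measurable_fun (`]0, +oo[ : set R) (fun u => expR (- (xi * u)) / u).
Proof.
apply: subspace_continuous_measurable_fun => //.
apply: continuous_in_subspaceT => u; rewrite inE /= in_itv /= andbT => u_gt0.
apply: (@continuousM R R (fun u => expR (- (xi * u))) GRing.inv).
  apply: continuous_comp; last exact: continuous_expR.
  apply: continuousN; apply: (@continuousM R R (cst xi) id); first exact: cst_continuous.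
  exact: cvg_id.
by apply: continuousV; [rewrite gt_eqF | exact: cvg_id].
Qed.

Lemma velocity_signs {R : realType} (v1 v2 : R) :
  (v2 < 0 < v1) \/ (0 < v2 < v1) -> [/\ 0 < v1, v2 != 0 & v2 < v1].
Proof.
case=> /andP[v2_sign v1_sign]; first by rewrite lt_eqF // (lt_trans v2_sign).
by rewrite gt_eqF // (lt_trans v2_sign).
Qed.

Section cone.
Context {R : realType}.
Variables (v1 v2 x t : R).
Hypothesis v_sign : (v2 < 0 < v1) \/ (0 < v2 < v1).
Hypothesis t_gt0 : 0 < t.
Hypothesis x_in_cone : v2 * t < x < v1 * t.

Let v1_gt0 : 0 < v1. Proof. by case: (velocity_signs v_sign). Qed.

Lemma cone_entry_ge0 : 0 <= cone_entry v1 v2 x.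
Proof.
rewrite /cone_entry /M_x; case: v_sign => /andP[v2_sign _].
  rewrite v2_sign le_max; have [x_ge0|x_lt0] := leP 0 x.
    by rewrite divr_ge0 // ltW.
  by rewrite orbC ler_ndivlMr // mul0r ltW.
rewrite (lt_gtF v2_sign) divr_ge0 // ltW //.
by case/andP: x_in_cone => + _; apply: lt_trans; rewrite mulr_gt0.
Qed.

Lemma in_coneE s : 0 < s -> s < t -> (v2 * s < x < v1 * s) = (cone_entry v1 v2 x < s).
Proof.
move=> s_gt0 st; rewrite /cone_entry /M_x.
case: v_sign => /andP[v2_sign _].
  by rewrite v2_sign gt_max ltr_pdivrMr // ltr_ndivrMr // andbC ![s * _]mulrC.
rewrite (lt_gtF v2_sign) ltr_pdivrMr // [s * v1]mulrC andb_idl // => _.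
by case/andP: x_in_cone => + _; apply: le_lt_trans; rewrite ler_pM2l // ltW.
Qed.

Lemma Gamma_xi_cone_entry xi :
  Gamma_xi xi v1 v2 x t = Gamma_inc 0 (cone_entry v1 v2 x * xi) (t * xi).
Proof.
rewrite /Gamma_xi /cone_entry; case: ifP => // v2_ge0.
have v2_gt0 : 0 < v2 by case: v_sign => /andP[] //; rewrite v2_ge0.
by rewrite /m_xt min_r // ler_pdivlMr // mulrC ltW //; case/andP: x_in_cone.
Qed.

Lemma integral_p_ac_limit (xi : R) :
  (\int[lebesgue_measure]_(s in `]0%R, t[) (expR (- (xi * s)) * p_ac_limit v1 v2 x s)%:E =
   ((v1 - v2)^-1)%:E *
   \int[lebesgue_measure]_(u in `]cone_entry v1 v2 x, t[) (expR (- (xi * u)) / u)%:E)%E.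
Proof.
have a_ge0 := cone_entry_ge0.
have [_ _ v21] := velocity_signs v_sign.
rewrite -ge0_integralZl_EFin //; first last.
- by rewrite invr_ge0 subr_ge0 ltW.
- apply/measurable_EFinP.
  apply: (measurable_funS (measurable_itv _) _ (measurable_expR_div xi)).
  move=> u /=; rewrite !in_itv /= => /andP[au _].
  by rewrite (le_lt_trans a_ge0 au).
- move=> u; rewrite /= in_itv /= => /andP[au _].
  by rewrite lee_fin divr_ge0 ?expR_ge0 // ltW // (le_lt_trans a_ge0 au).
rewrite [LHS]integral_mkcond [RHS]integral_mkcond; apply: eq_integral => s _.
rewrite /patch !mem_setE !in_itv /=.
have [s_gt0|s_le0] := ltP 0 s; last first.
  by rewrite ifF //; apply/negbTE; rewrite negb_and -leNgt (le_trans s_le0 a_ge0).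
have [st|ts] := ltP s t; last by rewrite !andbF.
rewrite /p_ac_limit (in_coneE s_gt0 st) andbT; case: ifP => _ /=; last by rewrite mulr0.
by rewrite -EFinM; congr EFin; field; rewrite !gt_eqF // subr_gt0.
Qed.

Lemma pi_limE xi : 0 < xi ->
  pi_lim xi v1 v2 x t =
  ((expR (- (xi * t)) * p_ac_limit v1 v2 x t)%:E +
   xi%:E * \int[lebesgue_measure]_(s in `]0%R, t[)
             (expR (- (xi * s)) * p_ac_limit v1 v2 x s)%:E)%E.
Proof.
move=> xi_gt0; have I_ind1 : I_ind v1 v2 x t = 1.
  rewrite /I_ind ifT //; case/andP: x_in_cone => v2t_lt_x ->; rewrite andbT.
  by apply: le_lt_trans v2t_lt_x; rewrite ge_min lexx.
rewrite /pi_lim /p_ac_limit x_in_cone I_ind1 integral_p_ac_limit Gamma_xi_cone_entry.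
by rewrite Gamma_inc0_dilation // ?cone_entry_ge0 // muleA -EFinM mul1r.
Qed.

End cone.

Section reset_density_limit.
Context {R : realType}.

Lemma p_gen_off_ray (lam v1 v2 vj x t : R) : x != vj * t ->
  p_gen lam v1 v2 vj x t = (p_ac lam v1 v2 x t)%:E.
Proof. by move=> x_neq; rewrite /p_gen /dirac_pt subr_eq0 (negbTE x_neq) mul0e add0e. Qed.

Lemma dirac_time_integral_cvg0 (xi vj x t : R) : vj != 0 ->
  (fun lam => dirac_time_integral lam xi vj x t) @ +oo --> 0%E.
Proof.
move=> vj_neq0; have [s0_in|s0_out] := boolP ((0 < x / vj) && (x / vj < t)); last first.
  by under eq_fun do rewrite /dirac_time_integral /= (negbTE s0_out); exact: cvg_cst.
under eq_fun do rewrite /dirac_time_integral /= s0_in /=.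
have /andP[s0_gt0 _] := s0_in.
apply: cvg_EFin; first exact: nearW.
rewrite -(mulr0 (expR (- (xi * (x / vj))))).
by apply: cvgM; [exact: cvg_cst | apply: inv_affine_cvg0; rewrite ?normr_eq0].
Qed.

Lemma integral_p_ac_cvg (xi v1 v2 x t : R) : v2 < v1 ->
  (fun lam => \int[lebesgue_measure]_(s in `]0%R, t[)
                (expR (- (xi * s)) * p_ac lam v1 v2 x s)%:E)%E @ +oo -->
  (\int[lebesgue_measure]_(s in `]0%R, t[)
     (expR (- (xi * s)) * p_ac_limit v1 v2 x s)%:E)%E.
Proof.
move=> v21; apply: cvg_monotone_convergence_pinfty => //.
- move=> lam lam_ge0; apply/measurable_EFinP; apply: measurable_funM.
    by apply: measurable_funTS; do 2 apply: measurableT_comp => //; exact: mulrl_measurable.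
  apply: (measurable_funS (measurable_itv _) _ (measurable_p_ac x v21 lam_ge0)).
  by move=> s /=; rewrite !in_itv /= => /andP[->].
- move=> lam s lam_ge0; rewrite /= in_itv /= => /andP[s_gt0 _].
  by rewrite lee_fin mulr_ge0 ?expR_ge0 // p_ac_ge0 // ltW.
- move=> lam lam' s lam_ge0 lam_le; rewrite /= in_itv /= => /andP[s_gt0 _].
  by rewrite lee_fin ler_wpM2l ?expR_ge0 // p_ac_nondecreasing // ltW.
- move=> s; rewrite /= in_itv /= => /andP[s_gt0 _].
  apply: cvg_EFin; first exact: nearW.
  by apply: cvgM; [exact: cvg_cst | exact: p_ac_cvg].
Qed.

End reset_density_limit.

Theorem corollary2 (R : realType) (xi v1 v2 vj x t : R) :
  0 < xi -> v2 < v1 -> ((v2 < 0 < v1) \/ (0 < v2 < v1)) ->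
  (vj = v1 \/ vj = v2) ->
  0 < t -> v2 * t < x < v1 * t ->
  (fun lam : R => ptilde lam xi v1 v2 vj x t) @ +oo --> pi_lim xi v1 v2 x t.
Proof.
move=> xi_gt0 v21 v_sign vj_v t_gt0 x_in_cone.
have [vj_neq0 x_off_ray] : vj != 0 /\ x != vj * t.
  have [v1_gt0 v2_neq0 _] := velocity_signs v_sign.
  have /andP[v2t_lt_x x_lt_v1t] := x_in_cone.
  case: vj_v => ->; split => //.
  - by rewrite gt_eqF.
  - by rewrite lt_eqF.
  - by rewrite gt_eqF.
rewrite pi_limE // -[X in (_ * X)%E]adde0 /ptilde.
apply: cvgeD; first exact: fin_num_adde_defr.
  under eq_fun do rewrite p_gen_off_ray // -EFinM.
  by apply: cvg_EFin; [exact: nearW | apply: cvgM; [exact: cvg_cst | exact: p_ac_cvg]].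
apply: cvgeZl => //; apply: cvgeD; first exact: fin_num_adde_defl.
  exact: integral_p_ac_cvg.
exact: dirac_time_integral_cvg0.
Qed.
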